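(* Let $0<m<L$, $\alpha>0$, $\rho\ge\rho_\mathrm{GD}:=\max(1-\alpha m,\ \alpha L-1)$ and $\gamma\in[0,\rho^2]$. Let $A=I$, $B=-\alpha I$, $C=I$ (all $n\times n$). Then there exists $\varepsilon\in[0,1]$ such that the matrix \[ \begin{bmatrix} A + \big((1-\varepsilon)m+\varepsilon L\big)BC & -\varepsilon\gamma B\\ (1-\varepsilon)(L-m)C & \varepsilon\gamma I\end{bmatrix} \] is $\rho$-Schur.
   Context: A square matrix is $\rho$-Schur if all its eigenvalues lie in the open disk of radius $\rho$. *)

From HB Require Import structures.
From mathcomp Require Import all_boot all_order all_algebra.
From mathcomp Require Import complex.
Set Implicit Arguments. Unset Strict Implicit. Unset Printing Implicit Defensive.
Import Order.TTheory GRing.Theory Num.Theory.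
Local Open Scope ring_scope.
Local Open Scope complex_scope.

Definition rho_Schur (R : rcfType) (k : nat) (M : 'M[R]_k) (rho : R) : Prop :=
  forall z : R[i], eigenvalue (map_mx (fun x : R => x%:C) M) z -> `|z| < rho%:C.

From HB Require Import structures.
From mathcomp Require Import all_boot all_order all_algebra.
From mathcomp Require Import complex ring lra.
Import Order.TTheory GRing.Theory Num.Theory.
Local Open Scope ring_scope.
Local Open Scope complex_scope.

(* The matrix is the Kronecker product of I_n with a real 2x2 matrix M_eps, so its
   eigenvalues are roots of the characteristic polynomial p_eps of M_eps. By Jury's
   criterion these lie in the open disk of radius rho as soon as p_eps(0) < rho^2,
   p_eps(rho) > 0 and p_eps(-rho) > 0. Now
     p_eps(z) = (1 - eps) z (z - (1 - alpha m)) + eps (z - (1 - alpha L)) (z - gamma)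
   is affine in eps. If gamma >= rho then rho >= 1 and eps = 0 works. Otherwise each of the
   three conditions holds at both eps = 0 and eps = 1, strictly at one of them, so it holds
   strictly at eps = 1/2. *)

Lemma eigenvalue_block_scalar (F : fieldType) (n : nat) (a b c d z : F) :
  eigenvalue (block_mx a%:M b%:M c%:M d%:M : 'M_(n + n)) z ->
  z ^+ 2 - (a + d) * z + (a * d - b * c) = 0.
Proof.
move/eigenvalueP => [v]; rewrite -[v]hsubmxK.
rewrite mul_row_block !mul_mx_scalar scale_row_mx => /eq_row_mx[Ex Ey] nz_v.
set p := _ + _; apply/eqP; apply: contraNT nz_v => p_nz.
suff [-> ->] : lsubmx v = 0 /\ rsubmx v = 0 by rewrite row_mx0.
split; apply: (scalerI p_nz); rewrite scaler0; apply/rowP => j;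
  move/rowP/(_ j): Ex; move/rowP/(_ j): Ey; rewrite !mxE;
  set x := v 0 (lshift n j); set y := v 0 (rshift n j) => ey ex.
- have -> : p * x = (z - d) * (z * x - (a * x + c * y)) + c * (z * y - (b * x + d * y)).
    by rewrite /p; ring.
  by rewrite ex ey !subrr !mulr0 addr0.
- have -> : p * y = (z - a) * (z * y - (b * x + d * y)) + b * (z * x - (a * x + c * y)).
    by rewrite /p; ring.
  by rewrite ex ey !subrr !mulr0 addr0.
Qed.

Lemma lt_of_root_pair (R : realFieldType) (x y rho : R) :
  0 < rho -> x * y < rho ^+ 2 -> 0 < (rho - x) * (rho - y) -> x < rho.
Proof.
move=> rho_gt0 xy_lt p_gt0; rewrite ltNge; apply/negP => rho_le_x.
have rho_lt_y : rho < y.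
  rewrite ltNge; apply/negP => y_le_rho.
  have : 0 <= (x - rho) * (rho - y) by rewrite mulr_ge0 // subr_ge0.
  lra.
have : 0 <= (x - rho) * y by rewrite mulr_ge0 ?subr_ge0 // ltW // (lt_trans rho_gt0).
have : 0 < rho * (y - rho) by rewrite mulr_gt0 ?subr_gt0.
lra.
Qed.

Lemma norm_lt_of_root_pair (R : realFieldType) (x y rho : R) :
  0 < rho -> x * y < rho ^+ 2 ->
  0 < (rho - x) * (rho - y) -> 0 < (rho + x) * (rho + y) -> `|x| < rho.
Proof.
move=> rho_gt0 xy_lt p_gt0 q_gt0; rewrite ltr_norml ltrNl.
rewrite (@lt_of_root_pair _ x y rho rho_gt0 xy_lt p_gt0) andbT.
apply: (@lt_of_root_pair _ _ (- y)) => //.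
- by rewrite mulrNN.
- by rewrite !opprK.
Qed.

Lemma norm_lt_of_quadratic_root (R : rcfType) (T D rho : R) (z : R[i]) :
  0 < rho -> D < rho ^+ 2 ->
  0 < rho ^+ 2 - T * rho + D -> 0 < rho ^+ 2 + T * rho + D ->
  z ^+ 2 - T%:C * z + D%:C = 0 -> `|z| < rho%:C.
Proof.
case: z => x y rho_gt0 D_lt p_gt0 q_gt0.
rewrite -!complexr0 expr2; simpc => /eqP; rewrite eq_complex /= => /andP[/eqP re /eqP im].
suff : x ^+ 2 + y ^+ 2 < rho ^+ 2.
  by rewrite -{2}(gtr0_norm rho_gt0) -sqrtr_sqr ltr_sqrt ?exprn_gt0.
have [y0 | y_neq0] := eqVneq y 0.
  rewrite {}y0 in re im *.
  have D_eq : D = x * (T - x) by lra.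
  have /ltr_normlP[x_gt x_lt] : `|x| < rho.
    apply: (@norm_lt_of_root_pair _ _ (T - x)) => //; first by rewrite -D_eq.
    - by rewrite [X in 0 < X](_ : _ = rho ^+ 2 - T * rho + D) // D_eq; ring.
    - by rewrite [X in 0 < X](_ : _ = rho ^+ 2 + T * rho + D) // D_eq; ring.
  have : 0 < (rho - x) * (rho + x) by apply: mulr_gt0; lra.
  lra.
(* A non-real root and its conjugate have sum T and product D = x^2 + y^2. *)
have T_eq : T = 2 * x.
  by apply: (mulIf y_neq0); lra.
rewrite T_eq in re; lra.
Qed.

Lemma rho_Schur_block_scalar (R : rcfType) (n : nat) (a b c d rho : R) :
  0 < rho -> a * d - b * c < rho ^+ 2 ->
  0 < rho ^+ 2 - (a + d) * rho + (a * d - b * c) ->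
  0 < rho ^+ 2 + (a + d) * rho + (a * d - b * c) ->
  rho_Schur (block_mx a%:M b%:M c%:M d%:M : 'M_(n + n)) rho.
Proof.
move=> rho_gt0 det_lt p_gt0 q_gt0 z.
rewrite map_block_mx !map_scalar_mx => /eigenvalue_block_scalar.
rewrite -rmorphD -!rmorphM -rmorphB; exact: norm_lt_of_quadratic_root.
Qed.

Lemma rho_Schur_interpolated_block (R : rcfType) (n : nat) (m L alpha gamma eps rho : R) :
  0 < rho -> eps * gamma * (1 - alpha * L) < rho ^+ 2 ->
  0 < (1 - eps) * (rho * (rho - (1 - alpha * m)))
      + eps * ((rho - (1 - alpha * L)) * (rho - gamma)) ->
  0 < (1 - eps) * (rho * (rho + (1 - alpha * m)))
      + eps * ((rho + (1 - alpha * L)) * (rho + gamma)) ->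
  rho_Schur (block_mx (1 - ((1 - eps) * m + eps * L) * alpha)%:M (eps * gamma * alpha)%:M
                      ((1 - eps) * (L - m))%:M (eps * gamma)%:M : 'M_(n + n)) rho.
Proof.
move=> rho_gt0 det_lt p_gt0 q_gt0; apply: rho_Schur_block_scalar => //.
- by rewrite [X in X < _](_ : _ = eps * gamma * (1 - alpha * L)) //; ring.
- by rewrite [X in 0 < X](_ : _ = (1 - eps) * (rho * (rho - (1 - alpha * m)))
      + eps * ((rho - (1 - alpha * L)) * (rho - gamma))) //; ring.
- by rewrite [X in 0 < X](_ : _ = (1 - eps) * (rho * (rho + (1 - alpha * m)))
      + eps * ((rho + (1 - alpha * L)) * (rho + gamma))) //; ring.
Qed.

Theorem lemma2p10 (R : rcfType) (n : nat) (m L alpha rho gamma : R) :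
  0 < m -> m < L -> 0 < alpha ->
  Num.max (1 - alpha * m) (alpha * L - 1) <= rho ->
  0 <= gamma -> gamma <= rho ^+ 2 ->
  let A : 'M[R]_n := 1%:M in
  let B : 'M[R]_n := - alpha *: 1%:M in
  let C : 'M[R]_n := 1%:M in
  exists eps : R, 0 <= eps /\ eps <= 1 /\
    rho_Schur
      (block_mx (A + ((1 - eps) * m + eps * L) *: (B *m C)) (- (eps * gamma) *: B)
                ((1 - eps) * (L - m) *: C)                  ((eps * gamma) *: 1%:M))
      rho.
Proof.
move=> m_gt0 m_lt_L alpha_gt0; rewrite ge_max => /andP[rho_ge_m rho_ge_L].
move=> gamma_ge0 gamma_le A B C.
have am_lt_aL : alpha * m < alpha * L by rewrite ltr_pM2l.
have am_gt0 : 0 < alpha * m by rewrite mulr_gt0.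
have rho_gt0 : 0 < rho by lra.
have block_scalar eps :
    block_mx (A + ((1 - eps) * m + eps * L) *: (B *m C)) (- (eps * gamma) *: B)
             ((1 - eps) * (L - m) *: C) ((eps * gamma) *: 1%:M)
  = block_mx (1 - ((1 - eps) * m + eps * L) * alpha)%:M (eps * gamma * alpha)%:M
              ((1 - eps) * (L - m))%:M (eps * gamma)%:M.
  rewrite /A /B /C mulmx1 !scale_scalar_mx -raddfD /= mulr1.
  by congr block_mx; congr scalar_mx; ring.
have [gamma_lt_rho | rho_le_gamma] := ltP gamma rho.
  exists (1 / 2); split; first lra; split; first lra.
  have : 0 <= gamma * (rho - (1 - alpha * L)) by rewrite mulr_ge0 //; lra.
  have : gamma * rho < rho ^+ 2 by rewrite expr2 ltr_pM2r.
  have : 0 <= rho * (rho - (1 - alpha * m)) by rewrite mulr_ge0 //; lra.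
  have : 0 < (rho - (1 - alpha * L)) * (rho - gamma) by rewrite mulr_gt0 //; lra.
  have : 0 < rho * (rho + (1 - alpha * m)) by rewrite mulr_gt0 //; lra.
  have : 0 <= (rho + (1 - alpha * L)) * (rho + gamma) by rewrite mulr_ge0 //; lra.
  move=> *; rewrite block_scalar; apply: rho_Schur_interpolated_block => //; lra.
exists 0; split; first lra; split; first lra.
have rho_ge1 : 1 <= rho.
  by rewrite -(ler_pM2l rho_gt0) mulr1 -expr2 (le_trans rho_le_gamma).
have : 0 < rho * (rho - (1 - alpha * m)) by rewrite mulr_gt0 //; lra.
have : 0 < rho * (rho + (1 - alpha * m)) by rewrite mulr_gt0 //; lra.
move=> *; rewrite block_scalar; apply: rho_Schur_interpolated_block => //; rewrite ?mul0r; lra.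
Qed.
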